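(* Let $V$ be a finite-dimensional vector space over $\mathbb{Q}$, let $h\in GL(V)$ and let $h=h_sh_u$ be its Chevalley (Jordan) decomposition, with $h_s$ semisimple, $h_u$ unipotent and $h_sh_u=h_uh_s$. Then $\mathrm{ht}(h)=\mathrm{ht}(h_s)$.
   Context: A lattice of $V$ is a finitely generated subgroup containing a basis of $V$. For $h\in GL(V)$, $\mathrm{ht}(h)$ is the minimum of $[\Lambda:E]$ over all pairs of lattices $E\subset\Lambda$ of $V$ with $h(E)\subset\Lambda$. *)

From HB Require Import structures.
From mathcomp Require Import all_boot all_order all_algebra all_field.
Set Implicit Arguments. Unset Strict Implicit. Unset Printing Implicit Defensive.
Import Order.TTheory GRing.Theory Num.Theory.
Local Open Scope ring_scope.

(* V = Q^n realised as row vectors 'rV[rat]_n; a linear map h acts by v |-> v *m h. *)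

Definition vset (n : nat) := 'rV[rat]_n -> Prop.

Definition zspan (n : nat) (gs : seq 'rV[rat]_n) : vset n :=
  fun v => exists c : 'I_(size gs) -> int,
    v = \sum_(i < size gs) (gs`_i) *~ c i.

Definition lattice (n : nat) (L : vset n) : Prop :=
  (exists gs : seq 'rV[rat]_n, forall v, L v <-> zspan gs v) /\
  (exists B : 'M[rat]_n, B \in unitmx /\ forall i, L (row i B)).

Definition has_index (n : nat) (L E : vset n) (k : nat) : Prop :=
  exists r : 'I_k -> 'rV[rat]_n,
    (forall i, L (r i)) /\
    (forall i j, E (r i - r j) -> i = j) /\
    (forall x, L x -> exists i, E (x - r i)).

Definition admissible_index (n : nat) (h : 'M[rat]_n) (k : nat) : Prop :=
  exists L E : vset n, lattice L /\ lattice E /\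
    (forall v, E v -> L v) /\ (forall v, E v -> L (v *m h)) /\
    has_index L E k.

Definition is_ht (n : nat) (h : 'M[rat]_n) (k : nat) : Prop :=
  admissible_index h k /\ forall k', admissible_index h k' -> (k <= k')%N.

Definition semisimple (n : nat) (A : 'M[rat]_n) : Prop :=
  diagonalizable (map_mx (ratr : rat -> algC) A).

Definition unipotent (n : nat) (A : 'M[rat]_n) : Prop :=
  exists k : nat, iter k (mulmx (A - 1%:M)) (1%:M : 'M[rat]_n) = 0.

From HB Require Import structures.
From mathcomp Require Import all_boot all_order all_algebra all_field.
From mathcomp Require Import boolp classical_sets.
Set Implicit Arguments. Unset Strict Implicit. Unset Printing Implicit Defensive.
Import Order.TTheory GRing.Theory Num.Theory.
Local Open Scope ring_scope.
Local Open Scope classical_set_scope.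

(* Write hu = 1 + N: N is nilpotent and commutes with hs, so h = hs + hs N,
   and B = hs N maps ker N^(i+1) into ker N^i while hs preserves every ker N^i.
   The basic step: if B maps V into a subgroup K with K B = 0 and K A ⊆ K, an
   admissible pair E ⊆ L for A yields the admissible pair
   (E ∩ K) + dE ⊆ (L ∩ K) + dL for A + B, d clearing the denominators of E B
   in L, of index at most [L ∩ K : E ∩ K] [L : (L ∩ K) + E] = [L : E].
   Splitting B along the flag ker N^i by projections and applying the step once
   per level gives ht(hs + hs N) <= ht(hs); applying it to h and -hs N gives
   the reverse inequality. *)

Section Subgroup.
Variable V : zmodType.
Implicit Types A B P : set V.

Definition subgroup P := P 0 /\ forall x y, P x -> P y -> P (x - y).

Section Closure.
Variable P : set V.
Hypothesis subP : subgroup P.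

Lemma subgroup0 : P 0. Proof. by case: subP. Qed.

Lemma subgroupB x y : P x -> P y -> P (x - y). Proof. by case: subP => _; apply. Qed.

Lemma subgroupN x : P x -> P (- x).
Proof. by move=> Px; rewrite -sub0r; apply: subgroupB => //; apply: subgroup0. Qed.

Lemma subgroupD x y : P x -> P y -> P (x + y).
Proof. by move=> Px Py; rewrite -[y]opprK; apply/subgroupB/subgroupN. Qed.

Lemma subgroupMn x m : P x -> P (x *+ m).
Proof.
move=> Px; elim: m => [|m IH]; first by rewrite mulr0n; apply: subgroup0.
by rewrite mulrS; apply: subgroupD.
Qed.

Lemma subgroupMz x z : P x -> P (x *~ z).
Proof.
by move=> Px; case: z => m; rewrite ?NegzE ?mulrNz; [|apply: subgroupN]; apply: subgroupMn.
Qed.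

Lemma subgroup_sum (I : finType) (F : I -> V) : (forall i, P (F i)) -> P (\sum_i F i).
Proof. by move=> PF; apply: (big_ind P) => //; [apply: subgroup0 | apply: subgroupD]. Qed.
End Closure.

Lemma subgroupI A B : subgroup A -> subgroup B -> subgroup (A `&` B).
Proof.
move=> sA sB; split; first by split; apply: subgroup0.
by move=> x y [Ax Bx] [Ay By]; split; apply: subgroupB.
Qed.

Lemma subgroup_addMn A B d :
  subgroup A -> subgroup B -> subgroup [set a + b *+ d | a in A & b in B].
Proof.
move=> sA sB; split.
  exists 0; first exact: subgroup0.
  by exists 0; [exact: subgroup0 | rewrite mul0rn addr0].
move=> _ _ [a Aa [b Bb <-]] [a' Aa' [b' Bb' <-]].
exists (a - a'); first exact: subgroupB.
by exists (b - b'); [exact: subgroupB | rewrite mulrnBl opprD addrACA].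
Qed.
End Subgroup.

Section ZSpan.
Variable n : nat.
Local Notation V := 'rV[rat]_n.
Implicit Types (gs : seq V) (S : vset n).

Lemma zspan_subgroup gs : subgroup (zspan gs).
Proof.
split; first by exists (fun=> 0); rewrite big1 // => i _; rewrite mulr0z.
move=> _ _ [c ->] [c' ->]; exists (fun i => c i - c' i).
by rewrite -sumrB; apply: eq_bigr => i _; rewrite mulrzBr.
Qed.

Lemma zspan_mem gs g : g \in gs -> zspan gs g.
Proof.
move=> gs_g; have [i i_lt ->] : exists2 i, (i < size gs)%N & g = gs`_i.
  by exists (index g gs); [rewrite index_mem | rewrite nth_index].
exists (fun j : 'I_(size gs) => (val j == i)%:Z).
rewrite (bigD1 (Ordinal i_lt)) //= eqxx mulr1z big1 ?addr0 // => j /negbTE.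
by rewrite -val_eqE /= => ->; rewrite mulr0z.
Qed.

Lemma zspan_sub gs S : subgroup S -> {in gs, forall g, S g} -> zspan gs `<=` S.
Proof.
move=> sS Sgs _ [c ->]; apply: subgroup_sum => // i.
by apply: subgroupMz => //; apply/Sgs/mem_nth.
Qed.

(* S contains t<gs> with finite index, so it is generated by the t gs_i and
   those residues sum_i f_i gs_i, 0 <= f_i < t, that lie in S. *)
Lemma zspan_between gs S t : (0 < t)%N -> subgroup S ->
  (forall v, zspan gs v -> S (v *+ t)) -> S `<=` zspan gs ->
  exists gs', forall v, S v <-> zspan gs' v.
Proof.
move=> t_gt0 sS tgsS Sgs; pose m := size gs.
pose res (f : {ffun 'I_m -> 'I_t}) :=
  let v := \sum_(i < m) gs`_i *+ f i in if `[< S v >] then v else 0.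
pose gs' := [seq g *+ t | g <- gs] ++ [seq res f | f <- enum {ffun 'I_m -> 'I_t}].
exists gs' => v; split; last first.
  apply: zspan_sub => // g; rewrite mem_cat => /orP[/mapP[g0 g0gs ->] | /mapP[f _ ->]].
    exact/tgsS/zspan_mem.
  by rewrite /res; case: asboolP => // _; apply: subgroup0.
have sgs' := zspan_subgroup gs'.
move=> Sv; have [c vE] := Sgs v Sv.
have t_pos : 0 < t%:Z by rewrite ltz_nat.
pose q i := (c i %/ t%:Z)%Z; pose r i := `|(c i %% t%:Z)%Z|%N.
have r_lt i : (r i < t)%N by rewrite -ltz_nat gez0_abs ?modz_ge0 ?ltz_pmod ?gt_eqF.
have {}vE : v = (\sum_(i < m) gs`_i *~ q i) *+ t + \sum_(i < m) gs`_i *+ r i.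
  rewrite vE -sumrMnl -big_split; apply: eq_bigr => i _ /=.
  rewrite {1}(divz_eq (c i) t%:Z) mulrzDr mulrzA -pmulrn.
  by rewrite [gs`_i *+ _]pmulrn gez0_abs ?modz_ge0 ?gt_eqF.
have mult_in : zspan gs' ((\sum_(i < m) gs`_i *~ q i) *+ t).
  rewrite -sumrMnl; apply: subgroup_sum => // i; rewrite !pmulrn mulrzAC -pmulrn.
  apply: subgroupMz => //; apply: zspan_mem.
  by rewrite mem_cat; apply/orP; left; apply/map_f/mem_nth.
suff S_res : S (\sum_(i < m) gs`_i *+ r i).
  rewrite vE; apply: subgroupD => //; apply: zspan_mem.
  rewrite mem_cat; apply/orP; right; apply/mapP.
  exists [ffun i => Ordinal (r_lt i)]; first by rewrite mem_enum.
  rewrite /res; set f := [ffun i => _].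
  have -> : \sum_(i < m) gs`_i *+ f i = \sum_(i < m) gs`_i *+ r i.
    by apply: eq_bigr => i _; rewrite ffunE.
  by case: asboolP.
have -> : \sum_(i < m) gs`_i *+ r i = v - (\sum_(i < m) gs`_i *~ q i) *+ t.
  by rewrite vE addrC addKr.
by apply: subgroupB => //; apply: tgsS; exists q.
Qed.
End ZSpan.

Definition sublat (V : zmodType) (K : set V) (d : nat) (X : set V) : set V :=
  [set x + y *+ d | x in X `&` K & y in X].

Section Lattice.
Variable n : nat.
Local Notation V := 'rV[rat]_n.
Implicit Types L E : vset n.

Lemma lattice_subgroup L : lattice L -> subgroup L.
Proof.
case=> [[gs gsE] _]; have [L0 LB] := zspan_subgroup gs.
by split=> [|x y /gsE Lx /gsE Ly]; apply/gsE; [|apply: LB].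
Qed.

Lemma lattice_mulrn L w : lattice L -> exists2 c, (0 < c)%N & L (w *+ c).
Proof.
move=> latL; have sL := lattice_subgroup latL.
case: latL => _ [B [B_unit LB]].
pose D (w : V) := exists2 c, (0 < c)%N & L (w *+ c).
have DD x y : D x -> D y -> D (x + y).
  move=> [c c_gt0 Lx] [c' c'_gt0 Ly]; exists (c * c')%N; first by rewrite muln_gt0 c_gt0.
  rewrite mulrnDl mulrnA [(c * c')%N]mulnC mulrnA.
  by apply: (subgroupD sL); apply: (subgroupMn sL).
have Drow (a : rat) i : D (a *: row i B).
  exists `|denq a|%N; first by rewrite absz_gt0 denq_neq0.
  rewrite scalerMnl pmulrn gez0_abs ?ltW ?denq_gt0 // -mulrzr -numqE scaler_int.
  exact: subgroupMz.
rewrite -[w](mulmxKV B_unit) mulmx_sum_row.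
apply: (big_ind D) => [||i _]; [|exact: DD|exact: Drow].
by exists 1%N; rewrite // mulr1n; apply: (subgroup0 sL).
Qed.

Lemma lattice_mulrn_seq L (s : seq V) : lattice L ->
  exists2 d, (0 < d)%N & forall w, w \in s -> L (w *+ d).
Proof.
move=> latL; have sL := lattice_subgroup latL.
elim: s => [|x s [d d_gt0 Ls]]; first by exists 1%N.
have [c c_gt0 Lx] := lattice_mulrn x latL.
exists (c * d)%N => [|w]; first by rewrite muln_gt0 c_gt0.
rewrite inE mulrnA => /predU1P[-> | /Ls Lw]; first exact: (subgroupMn sL).
by rewrite -mulrnA mulnC mulrnA; apply: (subgroupMn sL).
Qed.

Lemma lattice_mulrn_image L E (B : 'M[rat]_n) : lattice L -> lattice E ->
  exists2 d, (0 < d)%N & forall y, E y -> L ((y *m B) *+ d).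
Proof.
move=> latL [[gs gsE] _]; have sL := lattice_subgroup latL.
have [d d_gt0 Ld] := lattice_mulrn_seq [seq g *m B | g <- gs] latL.
exists d => // y /gsE.
apply: (@zspan_sub _ _ (fun y => L ((y *m B) *+ d))) => [|g gs_g]; last exact/Ld/map_f.
split=> [|x z Lx Lz]; first by rewrite mul0mx mul0rn; apply: (subgroup0 sL).
by rewrite mulmxBl mulrnBl; apply: (subgroupB sL).
Qed.

Lemma sublat_lattice E (K : vset n) t :
  lattice E -> subgroup K -> (0 < t)%N -> lattice (sublat K t E).
Proof.
move=> latE sK t_gt0; have sE := lattice_subgroup latE.
have tE_sub y : E y -> sublat K t E (y *+ t).
  by move=> Ey; exists 0; [split; apply: subgroup0 | exists y; rewrite ?add0r].
case: latE => [[gs gsE] [B [B_unit EB]]]; split.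
  apply: (zspan_between t_gt0 (subgroup_addMn t (subgroupI sE sK) sE)).
    by move=> v /gsE; apply: tE_sub.
  move=> _ [x [Ex _] [y Ey <-]]; apply/gsE.
  exact: subgroupD sE _ _ Ex (subgroupMn sE t Ey).
exists (t%:R *: B); split; first by rewrite unitmxZ // unitfE pnatr_eq0 -lt0n.
by move=> i; rewrite linearZ /= scaler_nat; apply: tE_sub.
Qed.
End Lattice.

Section Index.
Variable n : nat.
Local Notation V := 'rV[rat]_n.
Implicit Types L E K : vset n.

(* Keep from each E-class met by c the element of least rank. *)
Lemma has_index_of_cover (T : finType) L E (c : T -> V) : subgroup E ->
  (forall x, L (c x)) -> (forall v, L v -> exists x, E (v - c x)) ->
  exists2 k, (k <= #|T|)%N & has_index L E k.
Proof.
move=> sE Lc cover.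
pose least x := [forall y, `[< E (c x - c y) >] ==> (enum_rank x <= enum_rank y)%N].
pose S := [set x | least x].
exists #|S|; first exact: max_card.
exists (fun i => c (enum_val i)); split=> [i|]; first exact: Lc.
split=> [i j Eij | v Lv].
  have := enum_valP i; have := enum_valP j; rewrite !inE => /forallP lj /forallP li.
  have le_ij := implyP (li (enum_val j)) (introT (asboolP _) Eij).
  have le_ji : (enum_rank (enum_val j) <= enum_rank (enum_val i))%N.
    by apply: (implyP (lj _)); apply/asboolP; rewrite -opprB; apply: subgroupN.
  apply/enum_val_inj/enum_rank_inj/val_inj/eqP.
  by rewrite eqn_leq le_ij le_ji.
have [x Ex] := cover v Lv.
have Cx : `[< E (c x - c x) >] by apply/asboolP; rewrite subrr; apply: subgroup0.
have [y /asboolP Ey miny] :=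
  @arg_minnP _ x (fun z => `[< E (c z - c x) >]) (fun z => enum_rank z : nat) Cx.
have Sy : y \in S.
  rewrite inE; apply/forallP => z; apply/implyP => /asboolP Eyz; apply/miny/asboolP.
  have -> : c z - c x = - (c y - c z) + (c y - c x) by rewrite opprB addrA subrK.
  by apply: subgroupD => //; apply: subgroupN.
exists (enum_rank_in Sy y); rewrite enum_rankK_in //.
have -> : v - c y = (v - c x) - (c y - c x) by rewrite opprB addrA subrK.
exact: subgroupB.
Qed.

Lemma card_le_index (T : finType) L E k (f : T -> V) : subgroup E -> has_index L E k ->
  (forall x, L (f x)) -> (forall x y, E (f x - f y) -> x = y) -> (#|T| <= k)%N.
Proof.
move=> sE [r [_ [_ cover]]] Lf f_inj.
have [cls Ecls] := choice (fun x => cover _ (Lf x)).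
rewrite -[k]card_ord; apply: (leq_card cls) => x y eq_cls; apply: f_inj.
have -> : f x - f y = (f x - r (cls x)) - (f y - r (cls y)).
  by rewrite eq_cls opprB addrA subrK.
exact: subgroupB.
Qed.

Lemma has_index_split L E K k :
  subgroup L -> subgroup E -> subgroup K -> E `<=` L -> has_index L E k ->
  exists k1 k2, [/\ (k1 * k2 <= k)%N, has_index (L `&` K) E k1
                   & has_index L [set z + e | z in L `&` K & e in E] k2].
Proof.
move=> sL sE sK EL idx; have [r [Lr [_ cover]]] := idx.
have sLK := subgroupI sL sK.
have sM : subgroup [set z + e | z in L `&` K & e in E] := subgroup_addMn 1 sLK sE.
pose class_in_K i z := (L `&` K) z /\ E (z - r i).
pose a i := xget 0 (class_in_K i).
have LKa i : (L `&` K) (a i).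
  by rewrite /a; case: xgetP => [x _ [] | _] //; apply: subgroup0 sLK.
have [k1 _ idx1] : exists2 k1, (k1 <= #|'I_k|)%N & has_index (L `&` K) E k1.
  apply: (has_index_of_cover sE LKa) => z [Lz Kz]; have [i Ei] := cover z Lz.
  have [_ Eai] := @xgetI _ 0 (class_in_K i) z (conj (conj Lz Kz) Ei).
  exists i; have -> : z - a i = (z - r i) - (a i - r i) by rewrite opprB addrA subrK.
  exact: subgroupB.
have [k2 _ idx2] : exists2 k2, (k2 <= #|'I_k|)%N &
    has_index L [set z + e | z in L `&` K & e in E] k2.
  apply: (has_index_of_cover sM Lr) => w Lw; have [i Ei] := cover w Lw.
  by exists i; exists 0; [exact: subgroup0 | exists (w - r i); rewrite ?add0r].
exists k1, k2; split => //.
have [a' [LKa' [a'_inj _]]] := idx1; have [b [Lb [b_inj _]]] := idx2.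
rewrite -[k1]card_ord -[k2]card_ord -card_prod.
apply: (card_le_index (f := fun p => a' p.1 + b p.2) sE idx).
  by move=> [i j]; apply: (subgroupD sL); [case: (LKa' i) | exact: Lb].
move=> [i j] [i' j'] /= Eij.
have jj' : j = j'.
  apply: b_inj; exists (a' i' - a' i); first exact: subgroupB.
  by exists (a' i + b j - (a' i' + b j')); rewrite // -!addrA addKr opprD addrCA addNKr.
by move: Eij; rewrite -jj' opprD addrACA subrr addr0 => /a'_inj ->.
Qed.
End Index.

Definition ht_le n (Y X : 'M[rat]_n) :=
  forall k, admissible_index X k -> exists2 k', (k' <= k)%N & admissible_index Y k'.

Lemma ht_le_trans n (Z Y X : 'M[rat]_n) : ht_le Z Y -> ht_le Y X -> ht_le Z X.
Proof.
move=> ZY YX k /YX[k' le_k'k /ZY[k'' le_k''k' adm]].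
by exists k'' => //; apply: leq_trans le_k'k.
Qed.

Lemma is_ht_ht_le n (X Y : 'M[rat]_n) k :
  ht_le X Y -> ht_le Y X -> is_ht X k -> is_ht Y k.
Proof.
move=> XY YX [admX minX]; have [k' le_k'k admY] := YX k admX.
have [k'' le_k''k' /minX le_kk''] := XY k' admY.
have <- : k' = k by apply/eqP; rewrite eqn_leq le_k'k (leq_trans le_kk'').
split=> // k2 /XY[k3 le_k3k2 /minX le_kk3].
exact: leq_trans (leq_trans le_k'k le_kk3) le_k3k2.
Qed.

Lemma ht_le_add_into_kernel n (A B : 'M[rat]_n) (K : vset n) : subgroup K ->
  (forall v, K v -> K (v *m A)) -> (forall v, K (v *m B)) ->
  (forall v, K v -> v *m B = 0) -> ht_le (A + B) A.
Proof.
move=> sK KA KB BK k [L [E [latL [latE [EL [EAL idx]]]]]].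
have [sL sE] := (lattice_subgroup latL, lattice_subgroup latE).
have [d d_gt0 dEB] := lattice_mulrn_image B latL latE.
have [k1 [k2 [le_k12 [a [LKa [_ coverK]]] [b [Lb [_ coverM]]]]]] :=
  has_index_split sL sE sK EL idx.
have [k' le_k' idx'] : exists2 k', (k' <= #|{: 'I_k1 * 'I_k2}|)%N &
    has_index (sublat K d L) (sublat K d E) k'.
  apply: (@has_index_of_cover _ ('I_k1 * 'I_k2)%type _ _ (fun p => a p.1 + b p.2 *+ d)).
  - exact: subgroup_addMn d (subgroupI sE sK) sE.
  - by move=> [i j]; exists (a i) => //; exists (b j).
  move=> _ [x [Lx Kx] [w Lw <-]].
  have [j [z [Lz Kz] [e Ee wE]]] := coverM w Lw.
  have LKxz : (L `&` K) (x + z *+ d).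
    by split; apply: subgroupD => //; apply: subgroupMn.
  have [i Ei] := coverK _ LKxz; have [_ Kai] := LKa i.
  exists (i, j); exists (x + z *+ d - a i).
    by split => //; apply: subgroupB => //; case: LKxz.
  exists e => //=; rewrite -[w](subrK (b j)) -wE.
  by rewrite !mulrnDl addrA [a i + _]addrC addrKA addrA [RHS]addrAC.
exists k'; first by rewrite card_prod !card_ord in le_k'; exact: leq_trans le_k' le_k12.
have E'L' : sublat K d E `<=` sublat K d L.
  move=> _ [x [Ex Kx] [y Ey <-]].
  by exists x; [split=> //; apply: EL | exists y; first apply: EL].
have E'AL' v : sublat K d E v -> sublat K d L (v *m (A + B)).
  move=> [x [Ex Kx] [y Ey <-]]; exists (x *m A + (y *m B) *+ d).
    split; apply: subgroupD => //; [exact: EAL | exact: dEB | exact: KA | exact: subgroupMn].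
  exists (y *m A); first exact: EAL.
  have mulMnmx (C : 'M_n) : (y *+ d) *m C = (y *m C) *+ d by exact: (raddfMn (mulmxr C)).
  by rewrite mulmxDl !mulmxDr !mulMnmx (BK _ Kx) addr0 [y *m A *+ d + _]addrC addrA.
have latL' := sublat_lattice latL sK d_gt0; have latE' := sublat_lattice latE sK d_gt0.
by exists (sublat K d L), (sublat K d E).
Qed.

Section Flag.
Variables (n : nat) (N : 'M[rat]_n).

Definition ker_pow i : vset n := fun v => v *m N ^+ i = 0.

Definition proj_ker i := let U := kermx (N ^+ i) in proj_mx U U^C%MS.

Lemma ker_pow_subgroup i : subgroup (ker_pow i).
Proof.
split=> [|x y Kx Ky]; first by rewrite /ker_pow mul0mx.
by rewrite /ker_pow mulmxBl Kx Ky subrr.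
Qed.

Lemma ker_powS i v : ker_pow i v -> ker_pow i.+1 v.
Proof. by rewrite /ker_pow exprSr -mulmxE mulmxA => ->; rewrite mul0mx. Qed.

Lemma proj_ker_sub i v : ker_pow i (v *m proj_ker i).
Proof. by apply/eqP; rewrite -sub_kermx proj_mx_sub. Qed.

Lemma proj_ker_id i v : ker_pow i v -> v *m proj_ker i = v.
Proof. by move=> Kv; apply: proj_mx_id; rewrite ?capmx_compl // sub_kermx Kv. Qed.

Lemma proj_ker0 : proj_ker 0 = 0.
Proof.
apply/row_matrixP => i; rewrite row0 -[proj_ker 0]mul1mx row_mul.
by have := proj_ker_sub 0 (row i 1%:M); rewrite /ker_pow expr0 mulmx1.
Qed.

Lemma proj_ker_full m : N ^+ m = 0 -> proj_ker m = 1%:M.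
Proof.
move=> Nm; apply/row_matrixP => i; rewrite -[proj_ker m]mul1mx row_mul.
by rewrite proj_ker_id ?row1 // /ker_pow Nm mulmx0.
Qed.

Lemma ker_pow_stable X : GRing.comm X N -> forall i v, ker_pow i v -> ker_pow i (v *m X).
Proof.
move=> cXN i v Kv; rewrite /ker_pow -mulmxA mulmxE (commrX i cXN) -mulmxE.
by rewrite mulmxA Kv mul0mx.
Qed.

Lemma ker_pow_lower X :
  GRing.comm X N -> forall i v, ker_pow i.+1 v -> ker_pow i (v *m (X * N)).
Proof.
move=> cXN i v Kv; rewrite /ker_pow -mulmxA mulmxE -mulrA -exprS.
by rewrite (commrX i.+1 cXN) -mulmxE mulmxA Kv mul0mx.
Qed.

(* Add B one level of the flag at a time: A + Q_j B, with Q_j the projection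
   onto ker N^j, goes from A (j = 0) to A + B (j = m). *)
Lemma ht_le_add_flag (A B : 'M[rat]_n) m : N ^+ m = 0 ->
  (forall i v, ker_pow i v -> ker_pow i (v *m A)) ->
  (forall i v, ker_pow i.+1 v -> ker_pow i (v *m B)) -> ht_le (A + B) A.
Proof.
move=> Nm KA KB; have KB' i v : ker_pow i v -> ker_pow i (v *m B) by move/ker_powS/KB.
suff step j : ht_le (A + proj_ker j *m B) A by rewrite -(mul1mx B) -(proj_ker_full Nm).
elim: j => [|j IH]; first by rewrite proj_ker0 mul0mx addr0 => k; exists k.
apply: ht_le_trans IH.
have -> : A + proj_ker j.+1 *m B = A + proj_ker j *m B + (proj_ker j.+1 - proj_ker j) *m B.
  by rewrite -addrA -mulmxDl [proj_ker j + _]addrC subrK.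
have sK := ker_pow_subgroup j.
apply: (ht_le_add_into_kernel sK) => [v Kv | v | v Kv].
- by rewrite mulmxDr mulmxA; apply: (subgroupD sK); [apply: KA | apply/KB'/proj_ker_sub].
- rewrite mulmxA mulmxBr; apply/KB/(subgroupB (ker_pow_subgroup j.+1)).
    exact: proj_ker_sub.
  exact/ker_powS/proj_ker_sub.
- by rewrite mulmxA mulmxBr !proj_ker_id ?subrr ?mul0mx //; apply: ker_powS.
Qed.
End Flag.

Lemma iter_mulmx_expr n (N : 'M[rat]_n) k : iter k (mulmx N) 1%:M = N ^+ k.
Proof. by elim: k => //= k ->; rewrite exprS mulmxE. Qed.

Theorem lemma13 (n : nat) (h hs hu : 'M[rat]_n) :
  h \in unitmx ->
  semisimple hs -> unipotent hu ->
  h = hs *m hu -> hs *m hu = hu *m hs ->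
  forall k : nat, is_ht h k <-> is_ht hs k.
Proof.
move=> _ _ [m]; rewrite iter_mulmx_expr; set N := hu - 1%:M => Nm -> hs_hu k.
have cN : GRing.comm hs N.
  by rewrite /GRing.comm -!mulmxE mulmxBr mulmxBl mulmx1 mul1mx hs_hu.
have -> : hs *m hu = hs + hs * N by rewrite mulmxE mulrBr mulr1 addrC subrK.
have cNh : GRing.comm (hs + hs * N) N.
  by apply/commr_sym/commrD/commrM; [apply/commr_sym | apply/commr_sym | apply: commr_refl].
have cNs : GRing.comm (- hs) N by apply/commr_sym/commrN/commr_sym.
have le1 : ht_le (hs + hs * N) hs.
  exact: ht_le_add_flag Nm (ker_pow_stable cN) (ker_pow_lower cN).
have le2 : ht_le hs (hs + hs * N).
  have := ht_le_add_flag Nm (ker_pow_stable cNh) (ker_pow_lower cNs).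
  by rewrite mulNr addrK.
by split; apply: is_ht_ht_le.
Qed.
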